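(* Let $\mathcal{S}_0$ and $\mathcal{S}_1$ be two MSyDSs with common node set $V$ such that every local function is a threshold function and every master function is \texttt{AND}. Let $\nu$ be the largest negative threshold value occurring among the local functions of $\mathcal{S}_0$ and $\mathcal{S}_1$. Then $\mathcal{S}_0$ and $\mathcal{S}_1$ are inequivalent if and only if there is an inequivalence witness for $\mathcal{S}_0$ and $\mathcal{S}_1$ in which at most $\nu$ nodes have state 0.
   Context: A multilayer synchronous dynamical system (MSyDS) $\mathcal{S}$ over $\mathbb{B}=\{0,1\}$ with $k\ge 1$ layers consists of: a finite node set $V$; undirected simple graphs $G_i=(V,E_i)$, $1\le i\le k$ (all layers share the node set $V$); for each layer $i$ and node $v$ a local function $f_{i,v}$ with output in $\mathbb{B}$ whose inputs are the states of the nodes in the closed neighborhood of $v$ in $G_i$ ($v$ and its neighbors in $G_i$); and for each node $v$ a master function $\psi_v:\mathbb{B}^k\to\mathbb{B}$. A configuration is a map $\mathcal{C}:V\to\mathbb{B}$; its successor is $\mathcal{C}'$ with $\mathcal{C}'(v)=\psi_v(f_{1,v}(\mathcal{C}),\dots,f_{k,v}(\mathcal{C}))$ for all $v$ (synchronous update), where $f_{i,v}(\mathcal{C})$ is $f_{i,v}$ evaluated on the states in $\mathcal{C}$ of the closed neighborhood of $v$ in $G_i$. For an integer $t\ge 0$, the $t$-threshold function equals 1 iff at least $t$ of its inputs equal 1. If the local function of node $v$ in layer $i$ is the $t$-threshold function and $v$ has degree $\delta$ in $G_i$, its negative threshold is $\delta - t + 2$ (the number of 0's among its $\delta+1$ inputs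 that makes it equal 0). \texttt{AND} is 1 iff all inputs are 1. Two MSyDSs on the same node set are equivalent if every configuration has the same successor under both, and inequivalent otherwise. An inequivalence witness is a configuration of $V$ whose successors under the two systems differ. *)

From mathcomp Require Import all_boot all_order all_algebra.
Unset Strict Implicit. Unset Printing Implicit Defensive.

Record MSyDS (V : finType) := {
  nlayers : nat;
  layer : 'I_nlayers -> rel V;
  local : 'I_nlayers -> V -> (V -> bool) -> bool;
  master : V -> {ffun 'I_nlayers -> bool} -> bool
}.
Arguments nlayers {V} S : rename.
Arguments layer {V} S i : rename.
Arguments local {V} S i v C : rename.
Arguments master {V} S v b : rename.

Definition config (V : finType) := V -> bool.

Definition closed_nbhd {V : finType} (S : MSyDS V) (i : 'I_(nlayers S)) (v : V)
  : {set V} := [set u | (u == v) || layer S i v u].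

Definition degree {V : finType} (S : MSyDS V) (i : 'I_(nlayers S)) (v : V) : nat :=
  #|[set u | layer S i v u]|.

Definition wf_MSyDS {V : finType} (S : MSyDS V) : Prop :=
  [/\ 0 < nlayers S,
      (forall i, symmetric (layer S i)),
      (forall i, irreflexive (layer S i)) &
      (forall i v (C D : config V),
         {in closed_nbhd S i v, C =1 D} -> local S i v C = local S i v D)].

Definition successor {V : finType} (S : MSyDS V) (C : config V) : config V :=
  fun v => master S v [ffun i => local S i v C].

Definition threshold_fn {V : finType} (S : MSyDS V) (i : 'I_(nlayers S)) (v : V)
  (t : nat) (C : config V) : bool :=
  t <= #|[set u in closed_nbhd S i v | C u]|.

Definition threshold_AND {V : finType} (S : MSyDS V)
  (thr : 'I_(nlayers S) -> V -> nat) : Prop :=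
  (forall i v C, local S i v C = threshold_fn S i v (thr i v) C) /\
  (forall v (b : {ffun 'I_(nlayers S) -> bool}), master S v b = [forall i, b i]).

Definition neg_threshold {V : finType} (S : MSyDS V)
  (thr : 'I_(nlayers S) -> V -> nat) (i : 'I_(nlayers S)) (v : V) : int :=
  ((degree S i v)%:Z - (thr i v)%:Z + 2)%R.

Definition equivalent {V : finType} (S0 S1 : MSyDS V) : Prop :=
  forall C : config V, successor S0 C =1 successor S1 C.

Definition inequivalence_witness {V : finType} (S0 S1 : MSyDS V) (C : config V) : Prop :=
  exists v, successor S0 C v != successor S1 C v.

Definition num_zeros {V : finType} (C : config V) : nat := #|[set v | ~~ C v]|.

Definition is_max_neg_threshold {V : finType} (S0 S1 : MSyDS V)
  (thr0 : 'I_(nlayers S0) -> V -> nat) (thr1 : 'I_(nlayers S1) -> V -> nat)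
  (nu : int) : Prop :=
  [/\ (forall i v, (neg_threshold S0 thr0 i v <= nu)%R),
      (forall i v, (neg_threshold S1 thr1 i v <= nu)%R) &
      ((exists i v, neg_threshold S0 thr0 i v = nu) \/
       (exists i v, neg_threshold S1 thr1 i v = nu))].

From mathcomp Require Import all_boot all_order all_algebra.
From mathcomp Require Import zify.
From Stdlib Require Import Classical.

Set Implicit Arguments.
Unset Strict Implicit.
Unset Printing Implicit Defensive.

(** Threshold functions are monotone, hence so are their ANDs.  If [S1]
    outputs 0 and [S0] outputs 1 at [v] under [C], some layer of [S1] sees
    fewer than [t] ones in the closed neighbourhood [N] of [v].  Keep only
    [|N| + 1 - t] of the zeros of [C] in [N] and set every other state to 1:
    that layer still sees fewer than [t] ones, so [S1] still outputs 0, while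
    [S0] still outputs 1 by monotonicity, and there are
    [|N| + 1 - t <= delta + 2 - t <= nu] zeros left. *)

Lemma subset_of_card (T : finType) (A : {set T}) n :
  n <= #|A| -> exists2 Z : {set T}, Z \subset A & #|Z| = n.
Proof.
case/card_geqP=> s [uniq_s size_s sA]; exists [set x in s].
  by apply/subsetP=> x; rewrite inE => /sA.
by rewrite cardsE -size_s; apply/card_uniqP.
Qed.

Lemma raise_config_below_threshold (V : finType) (N : {set V}) (C : config V) t :
  #|[set u in N | C u]| < t ->
  exists2 D : config V, (forall u, C u -> D u) &
    #|[set u in N | D u]| < t /\ num_zeros D = #|N|.+1 - t.
Proof.
move=> ones_lt.
set zeros := [set u in N | ~~ C u].
have card_N : #|[set u in N | C u]| + #|zeros| = #|N|.
  rewrite -(cardsID [set u | C u] N); congr (_ + _); apply: eq_card => u;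
  by rewrite !inE andbC.
have [|Z sZ card_Z] := @subset_of_card _ zeros (#|N|.+1 - t); first by lia.
have sZN : Z \subset N.
  by apply: subset_trans sZ _; rewrite /zeros setIdE subsetIl.
exists (fun u => u \notin Z).
  by move=> u Cu; apply/negP => /(subsetP sZ); rewrite inE Cu andbF.
split; last by rewrite /num_zeros -card_Z; apply: eq_card => u; rewrite !inE negbK.
have -> : [set u in N | u \notin Z] = N :\: Z by apply/setP => u; rewrite !inE andbC.
by rewrite cardsD (setIidPr sZN) card_Z; lia.
Qed.

Lemma card_closed_nbhd_le (V : finType) (S : MSyDS V) i v :
  #|closed_nbhd S i v| <= (degree S i v).+1.
Proof.
have -> : closed_nbhd S i v = v |: [set u | layer S i v u].
  by apply/setP=> u; rewrite !inE.
by rewrite cardsU1 /degree; case: (_ \notin _).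
Qed.

Lemma threshold_fn_monotone (V : finType) (S : MSyDS V) i v t (C D : config V) :
  (forall u, C u -> D u) -> threshold_fn S i v t C -> threshold_fn S i v t D.
Proof.
move=> CD /leq_trans; apply; apply: subset_leq_card; apply/subsetP => u.
by rewrite !inE => /andP[-> /CD].
Qed.

Lemma neg_threshold_gt0 (V : finType) (S : MSyDS V) thr i v (C : config V) :
  threshold_fn S i v (thr i v) C -> (0 < neg_threshold S thr i v)%R.
Proof.
move=> t_le; have := card_closed_nbhd_le i v.
have := subset_leq_card (subsetIl (closed_nbhd S i v) [set u | C u]).
move: t_le; rewrite /threshold_fn setIdE /neg_threshold; lia.
Qed.

Section ThresholdAND.

Variables (V : finType) (S : MSyDS V) (thr : 'I_(nlayers S) -> V -> nat).
Hypothesis thr_AND : threshold_AND S thr.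

Lemma successor_threshold_AND C v :
  successor S C v = [forall i, threshold_fn S i v (thr i v) C].
Proof.
case: thr_AND => local_thr master_AND; rewrite /successor master_AND.
by apply: eq_forallb => i; rewrite ffunE local_thr.
Qed.

Lemma successor_threshold_AND_monotone (C D : config V) v :
  (forall u, C u -> D u) -> successor S C v -> successor S D v.
Proof.
move=> CD; rewrite !successor_threshold_AND => /forallP sC.
by apply/forallP => i; apply: threshold_fn_monotone CD (sC i).
Qed.

End ThresholdAND.

Lemma bounded_witness_of_successor_gap (V : finType) (A B : MSyDS V)
    thrA thrB (nu : int) (C : config V) v :
  0 < nlayers A -> threshold_AND A thrA -> threshold_AND B thrB ->
  (forall i v, (neg_threshold A thrA i v <= nu)%R) ->
  (forall i v, (neg_threshold B thrB i v <= nu)%R) ->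
  successor A C v -> ~~ successor B C v ->
  exists D : config V, inequivalence_witness A B D /\ ((num_zeros D)%:Z <= nu)%R.
Proof.
move=> kA_gt0 tA tB boundA boundB sAC.
rewrite (successor_threshold_AND tB) negb_forall => /existsP[i].
rewrite /threshold_fn -ltnNge => /raise_config_below_threshold[D CD [ones_lt zeros_D]].
have sAD := successor_threshold_AND_monotone tA CD sAC.
have sBD : ~~ successor B D v.
  rewrite (successor_threshold_AND tB) negb_forall; apply/existsP; exists i.
  by rewrite /threshold_fn -ltnNge.
exists D; split; first by exists v; rewrite sAD; case: successor sBD.
(* Needed when [t > |N| + 1], where the truncated [|N|.+1 - t] is 0. *)
have nu_gt0 : (0 < nu)%R.
  rewrite (successor_threshold_AND tA) in sAD.
  have := boundA (Ordinal kA_gt0) v.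
  have := neg_threshold_gt0 (forallP sAD (Ordinal kA_gt0)); lia.
have := boundB i v; have := card_closed_nbhd_le i v.
rewrite /neg_threshold zeros_D; lia.
Qed.

Lemma inequivalence_witness_sym (V : finType) (S0 S1 : MSyDS V) (C : config V) :
  inequivalence_witness S0 S1 C -> inequivalence_witness S1 S0 C.
Proof. by case=> v neq; exists v; rewrite eq_sym. Qed.

Theorem lemma5p3 (V : finType) (S0 S1 : MSyDS V)
  (thr0 : 'I_(nlayers S0) -> V -> nat) (thr1 : 'I_(nlayers S1) -> V -> nat)
  (nu : int) :
  wf_MSyDS S0 -> wf_MSyDS S1 ->
  threshold_AND S0 thr0 -> threshold_AND S1 thr1 ->
  is_max_neg_threshold S0 S1 thr0 thr1 nu ->
  (~ equivalent S0 S1 <->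
   exists C : config V, inequivalence_witness S0 S1 C /\ ((num_zeros C)%:Z <= nu)%R).
Proof.
move=> [k0_gt0 _ _ _] [k1_gt0 _ _ _] t0 t1 [bound0 bound1 _]; split; last first.
  by case=> C [[v neq] _] /(_ C v) eq; rewrite eq eqxx in neq.
move=> /not_all_ex_not[C /not_all_ex_not[v /eqP]].
case s0: (successor S0 C v); case s1: (successor S1 C v) => // _.
  exact: bounded_witness_of_successor_gap k0_gt0 t0 t1 bound0 bound1 s0 (negbT s1).
have [D [/inequivalence_witness_sym wD zeros_D]] :=
  bounded_witness_of_successor_gap k1_gt0 t1 t0 bound1 bound0 s1 (negbT s0).
by exists D.
Qed.
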